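(* Let $A$ be a finite alphabet and $k\ge 1$. Let $x,y\in A^*$ be $k$-binomially equivalent. Then for all words $p,q,r\in A^*$, the words $pxqyr$ and $pyqxr$ are $(k+1)$-binomially equivalent.
   Context: For words $w,z\in A^*$, $\binom{w}{z}$ denotes the number of occurrences of $z$ as a (scattered) subword of $w$, i.e. the number of strictly increasing maps $\varphi:\{1,\ldots,|z|\}\to\{1,\ldots,|w|\}$ with $w_{\varphi(1)}\cdots w_{\varphi(|z|)}=z$ (with $\binom{w}{\varepsilon}=1$). Two words $u,v$ are $m$-binomially equivalent if $\binom{u}{z}=\binom{v}{z}$ for all words $z$ of length at most $m$. *)

From mathcomp Require Import all_boot.
Set Implicit Arguments. Unset Strict Implicit. Unset Printing Implicit Defensive.

(* binom w z = number of occurrences of z as a scattered subword of w,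
   i.e. number of strictly increasing embeddings of positions of z into w. *)
Fixpoint binom (A : eqType) (w z : seq A) : nat :=
  match z with
  | [::] => 1
  | b :: z' =>
    match w with
    | [::] => 0
    | a :: w' => binom w' z + (a == b) * binom w' z'
    end
  end.

Definition binom_equiv (A : eqType) (m : nat) (u v : seq A) : Prop :=
  forall z : seq A, size z <= m -> binom u z = binom v z.

From mathcomp Require Import all_boot.
Set Implicit Arguments. Unset Strict Implicit. Unset Printing Implicit Defensive.

(* Expanding binom (u ++ x ++ v) z over the splittings z = z1 z2 z3, the
   products binom u z1 * binom x z2 * binom v z3 agree with those for y
   whenever |z2| <= k, so for |z| <= k + 1 only the splitting z2 = z can
   differ, contributing binom x z against binom y z.  Hence replacing x by y
   anywhere in a word changes binom _ z by the same amount binom y z - binom x z;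
   doing so once in p x q y r and once in p y q x r reaches p y q y r from both. *)

Lemma binom0s (A : eqType) (z : seq A) : binom [::] z = (z == [::]).
Proof. by case: z. Qed.

Lemma binoms0 (A : eqType) (w : seq A) : binom w [::] = 1.
Proof. by case: w. Qed.

Lemma binom_cat (A : eqType) (u v z : seq A) :
  binom (u ++ v) z =
  \sum_(i < (size z).+1) binom u (take i z) * binom v (drop i z).
Proof.
elim: u z => [|a u IHu] z.
  rewrite big_ord_recl take0 drop0 binom0s mul1n big1 ?addn0 // => i _.
  by rewrite lift0 binom0s; case: z i => [|b z] [].
case: z => [|b z]; first by rewrite big_ord_recl big_ord0 !binoms0.
rewrite /= !IHu big_ord_recl [in RHS]big_ord_recl big_distrr /= -addnA.
congr (_ + _); first by rewrite binoms0.
rewrite -big_split; apply: eq_bigr => i _.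
by rewrite add0n mulnDl mulnA.
Qed.

Lemma binom_cat_last (A : eqType) (x v z : seq A) :
  binom (x ++ v) z =
  \sum_(i < size z) binom x (take i z) * binom v (drop i z) + binom x z.
Proof. by rewrite binom_cat big_ord_recr /= take_size drop_size binoms0 muln1. Qed.

Lemma binom_cat_first (A : eqType) (u w z : seq A) :
  binom (u ++ w) z =
  binom w z + \sum_(i < size z) binom u (take i.+1 z) * binom w (drop i.+1 z).
Proof. by rewrite binom_cat big_ord_recl take0 drop0 binoms0 mul1n. Qed.

Lemma binom_equiv_cat (A : eqType) k (x y u v : seq A) :
  binom_equiv k x y -> binom_equiv k u v -> binom_equiv k (x ++ u) (y ++ v).
Proof.
move=> Hxy Huv z hz; rewrite !binom_cat; apply: eq_bigr => i _.
rewrite Hxy ?Huv // ?size_drop ?size_take_min.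
- exact: leq_trans (leq_subr _ _) hz.
- exact: leq_trans (geq_minr _ _) hz.
Qed.

Section Substitution.

Variables (A : eqType) (k : nat) (x y : seq A).
Hypothesis Hxy : binom_equiv k x y.

Lemma binom_catr_equiv (v z : seq A) : size z <= k.+1 ->
  binom (x ++ v) z + binom y z = binom (y ++ v) z + binom x z.
Proof.
move=> hz; rewrite !binom_cat_last -!addnA [binom x z + _]addnC.
congr (_ + _); apply: eq_bigr => i _; rewrite Hxy // size_take_min.
by rewrite -ltnS (leq_ltn_trans (geq_minl _ _)) // (leq_trans (ltn_ord i) hz).
Qed.

Lemma binom_subst_equiv (u v z : seq A) : size z <= k.+1 ->
  binom (u ++ x ++ v) z + binom y z = binom (u ++ y ++ v) z + binom x z.
Proof.
move=> hz; rewrite !(binom_cat_first u) addnAC [RHS]addnAC binom_catr_equiv //.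
congr (_ + _ + _); apply: eq_bigr => i _.
rewrite (binom_equiv_cat Hxy (fun _ _ => erefl)) // size_drop.
by rewrite leq_subLR (leq_trans hz) // addSn ltnS leq_addl.
Qed.

End Substitution.

Theorem mainTheorem3 (A : finType) (k : nat) (x y : seq A) :
  1 <= k -> binom_equiv k x y ->
  forall p q r : seq A,
    binom_equiv k.+1 (p ++ x ++ q ++ y ++ r) (p ++ y ++ q ++ x ++ r).
Proof.
move=> _ Hxy p q r z hz.
have Hxqy := binom_subst_equiv Hxy p (q ++ y ++ r) hz.
have Hyqx := binom_subst_equiv Hxy (p ++ y ++ q) r hz.
rewrite -!catA in Hyqx.
by apply: (@addIn (binom y z)); rewrite Hxqy Hyqx.
Qed.
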